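(* Let $\mathbb{K}\in\{\mathbb{R},\mathbb{C}\}$ and let $\{T_j\}_{j=1}^n\subset\mathbb{K}^{d\times r}$ be a g-frame with g-frame operator $S=\sum_{j=1}^nT_jT_j^*$. Then $\operatorname{trace}(T_j^*S^{-1}T_j)\le r$ for all $j=1,\ldots,n$. Moreover, if $\operatorname{trace}(T_j^*S^{-1}T_j)=r$ for some $j$, then $T_j$ has no zero columns and $\operatorname{range}(S^{-1/2}T_k)\perp\operatorname{range}(S^{-1/2}T_j)$ for all $k\neq j$.
   Context: A collection $\{T_j\}_{j=1}^n\subset\mathbb{K}^{d\times r}$ is a g-frame if there are constants $0<A\le B<\infty$ with $A\|x\|^2\le\sum_{j=1}^n\|T_j^*x\|^2\le B\|x\|^2$ for all $x\in\mathbb{K}^d$. $S^{-1/2}$ is the inverse of the positive definite square root of $S$. *)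

From HB Require Import structures.
From mathcomp Require Import all_boot all_order all_algebra.
Set Implicit Arguments. Unset Strict Implicit. Unset Printing Implicit Defensive.
Import Order.TTheory GRing.Theory Num.Theory.
Local Open Scope ring_scope.
Local Open Scope sesquilinear_scope.

(* The scalar field K is modelled inside a numClosedFieldType C (e.g. the
   complex numbers): [realK = false] means K = C, [realK = true] means
   K = R, i.e. all vectors/matrices are required to have real entries. *)

Definition Kmx (C : numClosedFieldType) (realK : bool) (m p : nat)
  (M : 'M[C]_(m, p)) : Prop := realK -> M \is a realmx.

Definition sqnorm (C : numClosedFieldType) (m : nat) (v : 'cV[C]_m) : C :=
  \sum_(i < m) `|v i 0| ^+ 2.

Definition is_gframe (C : numClosedFieldType) (realK : bool) (d r n : nat)
  (T : 'I_n -> 'M[C]_(d, r)) : Prop :=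
  exists A B : C, [/\ 0 < A, A <= B &
    forall x : 'cV[C]_d, Kmx realK x ->
      A * sqnorm x <= \sum_(j < n) sqnorm ((T j)^t* *m x) <= B * sqnorm x].

Definition gframe_op (C : numClosedFieldType) (d r n : nat)
  (T : 'I_n -> 'M[C]_(d, r)) : 'M[C]_d :=
  \sum_(j < n) (T j *m (T j)^t*).

Definition posdef (C : numClosedFieldType) (realK : bool) (d : nat)
  (P : 'M[C]_d) : Prop :=
  [/\ Kmx realK P, P^t* = P &
      forall x : 'cV[C]_d, Kmx realK x -> x != 0 -> 0 < (x^t* *m P *m x) 0 0].

Definition range_orth (C : numClosedFieldType) (realK : bool) (d p q : nat)
  (X : 'M[C]_(d, p)) (Y : 'M[C]_(d, q)) : Prop :=
  forall (u : 'cV[C]_p) (v : 'cV[C]_q), Kmx realK u -> Kmx realK v ->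
    (X *m u)^t* *m (Y *m v) = 0.

(* Write G_j = T_j^* S^-1 T_j and B_kj = T_k^* S^-1 T_j.  Because
   S = \sum_k T_k T_k^*, we have \sum_k B_kj^* B_kj = G_j, and G_j is
   Hermitian; together these give the Pythagorean identity
     r - tr G_j = ||I - G_j||_F^2 + \sum_(k != j) ||B_kj||_F^2.
   Hence tr G_j <= r, and equality forces G_j = I (so no column of T_j
   vanishes) and B_kj = 0 for k != j, which, as S^-1 = (P^-1)^* P^-1 for any
   Hermitian square root P of S, is the orthogonality of the ranges of
   P^-1 T_k and P^-1 T_j.  The lower frame bound makes S invertible; over
   the reals one uses that the kernel of a real matrix is spanned by real
   vectors. *)
From HB Require Import structures.
From mathcomp Require Import all_boot all_order all_algebra.
From mathcomp Require Import ring.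
Set Implicit Arguments. Unset Strict Implicit. Unset Printing Implicit Defensive.
Import Order.TTheory GRing.Theory Num.Theory.
Local Open Scope ring_scope.
Local Open Scope sesquilinear_scope.

Lemma mulmx_eq0_unitmx (F : fieldType) n (A : 'M[F]_n) :
  (forall v : 'cV_n, A *m v = 0 -> v = 0) -> A \in unitmx.
Proof.
move=> Ainj; rewrite -unitmx_tr -row_free_unit -kermx_eq0.
apply/eqP/row_matrixP => i; rewrite row0.
have /sub_kermxP uA0 := row_sub i (kermx A^T).
apply: trmx_inj; rewrite trmx0; apply: Ainj.
by move/(congr1 trmx): uA0; rewrite trmx_mul trmxK trmx0.
Qed.

Lemma mulmx_eq1_col_neq0 (R : nzRingType) m n (A : 'M[R]_(n, m)) (X : 'M_(m, n))
  (i : 'I_n) : A *m X = 1%:M -> col i X != 0.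
Proof.
move=> AX1; apply/negP => /eqP Xi0.
have : col i (A *m X) = A *m col i X by rewrite !colE mulmxA.
rewrite AX1 Xi0 mulmx0 => /(congr1 (fun v : 'cV_n => v i 0)).
by rewrite !mxE eqxx => /eqP; rewrite oner_eq0.
Qed.

Section ConjugateTranspose.
Variable C : numClosedFieldType.

Lemma trmxC_mul m n p (A : 'M[C]_(m, n)) (B : 'M[C]_(n, p)) :
  (A *m B)^t* = B^t* *m A^t*.
Proof. by rewrite trmx_mul map_mxM. Qed.

Lemma trmxC_sum m n k (F : 'I_k -> 'M[C]_(m, n)) :
  (\sum_i F i)^t* = \sum_i (F i)^t*.
Proof.
apply/matrixP => a b; rewrite !(mxE, summxE) rmorph_sum.
by apply: eq_bigr => i _; rewrite !mxE.
Qed.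

Lemma trmxC_inv n (A : 'M[C]_n) : (invmx A)^t* = invmx (A^t*).
Proof. by rewrite trmx_inv map_invmx. Qed.

Lemma mxtrace_trmxC_mul m n (X : 'M[C]_(m, n)) :
  \tr (X^t* *m X) = \sum_i \sum_k `|X k i| ^+ 2.
Proof.
apply: eq_bigr => i _; rewrite mxE; apply: eq_bigr => k _.
by rewrite !mxE normCK mulrC.
Qed.

Lemma mxtrace_trmxC_mul_ge0 m n (X : 'M[C]_(m, n)) : 0 <= \tr (X^t* *m X).
Proof.
by rewrite mxtrace_trmxC_mul; do 2!apply: sumr_ge0 => ? _; exact: exprn_ge0.
Qed.

Lemma mxtrace_trmxC_mul_eq0 m n (X : 'M[C]_(m, n)) :
  \tr (X^t* *m X) = 0 -> X = 0.
Proof.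
rewrite mxtrace_trmxC_mul => /psumr_eq0P sum0; apply/matrixP => k i.
have /psumr_eq0P coli0 : \sum_k `|X k i| ^+ 2 = 0.
  by apply: sum0 => // i' _; apply: sumr_ge0 => l _; exact: exprn_ge0.
have /eqP := coli0 (fun l _ => exprn_ge0 2 (normr_ge0 (X l i))) k isT.
by rewrite expf_eq0 /= normr_eq0 mxE => /eqP.
Qed.

Lemma sqnormE m (v : 'cV[C]_m) : sqnorm v = \tr (v^t* *m v).
Proof. by rewrite mxtrace_trmxC_mul big_ord1. Qed.

Lemma realmx_mulmx_eq0 m n (A : 'M[C]_(m, n)) : A \is a realmx ->
  (forall x : 'cV_n, x \is a realmx -> A *m x = 0 -> x = 0) ->
  forall x : 'cV_n, A *m x = 0 -> x = 0.
Proof.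
move=> Areal Ainj x Ax0.
pose a := x ^ (@Re _); pose b := x ^ (@Im _).
have areal : a \is a realmx by apply/mxOverP => i j; rewrite !mxE Creal_Re.
have breal : b \is a realmx by apply/mxOverP => i j; rewrite !mxE Creal_Im.
have xE : x = a + 'i *: b by apply/matrixP => i j; rewrite !mxE -Crect.
have real0 : (0 : 'cV[C]_m) \is a realmx by apply: mxOver0; exact: real0.
have : A *m a + 'i *: (A *m b) = 0 + 'i *: 0.
  by rewrite scaler0 addr0 scalemxAr -mulmxDr -xE.
case/(eqmx_ReiIm (mxOverM Areal areal) (mxOverM Areal breal) real0 real0).
by move=> /(Ainj _ areal) a0 /(Ainj _ breal) b0; rewrite xE a0 b0 scaler0 addr0.
Qed.

Lemma trmxC_invmx_mul n (P : 'M[C]_n) : P^t* = P -> P *m P \in unitmx ->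
  (invmx P)^t* *m invmx P = invmx (P *m P).
Proof.
move=> PH PPunit.
have Punit : P \in unitmx by move: PPunit; rewrite unitmx_mul => /andP[].
rewrite trmxC_inv PH -[LHS]mulmx1 -(mulmxV PPunit) !mulmxA.
by rewrite mulmxKV // mulVmx // mul1mx.
Qed.

Lemma range_orth_invmx_sqrt realK d p q (P : 'M[C]_d)
  (X : 'M_(d, p)) (Y : 'M_(d, q)) :
  P^t* = P -> P *m P \in unitmx -> X^t* *m invmx (P *m P) *m Y = 0 ->
  range_orth realK (invmx P *m X) (invmx P *m Y).
Proof.
move=> PH PPunit XY0 u v _ _.
rewrite !trmxC_mul -!mulmxA (mulmxA ((invmx P)^t*)) trmxC_invmx_mul //.
by rewrite (mulmxA (X^t*)) (mulmxA (X^t* *m _)) XY0 mul0mx mulmx0.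
Qed.

End ConjugateTranspose.

Section GFrame.
Variables (C : numClosedFieldType) (d r n : nat) (T : 'I_n -> 'M[C]_(d, r)).
Local Notation S := (gframe_op T).

Lemma trmxC_gframe_op : S^t* = S.
Proof.
by rewrite trmxC_sum; apply: eq_bigr => j _; rewrite trmxC_mul trmxCK.
Qed.

Lemma gframe_op_form (x : 'cV[C]_d) :
  \sum_j sqnorm ((T j)^t* *m x) = \tr (x^t* *m (S *m x)).
Proof.
rewrite mulmx_suml mulmx_sumr raddf_sum; apply: eq_bigr => j _.
by rewrite sqnormE trmxC_mul trmxCK !mulmxA.
Qed.

Lemma gframe_op_real : (forall j, T j \is a realmx) -> S \is a realmx.
Proof.
move=> Treal; apply/mxOverP => a b; rewrite summxE.
apply: rpred_sum => j _; apply: (mxOverP (mxOverM (Treal j) _)).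
by apply/mxOverP => a' b'; rewrite !mxE (CrealP (mxOverP (Treal j) b' a'));
  exact: (mxOverP (Treal j)).
Qed.

Lemma gframe_op_unit realK :
  (forall j, Kmx realK (T j)) -> is_gframe realK T -> S \in unitmx.
Proof.
move=> TK [A [B [A_gt0 _ frameT]]].
have Kinj (x : 'cV_d) : Kmx realK x -> S *m x = 0 -> x = 0.
  move=> Kx Sx0; have /andP[lower _] := frameT x Kx.
  rewrite gframe_op_form Sx0 mulmx0 linear0 pmulr_rle0 // in lower.
  apply: mxtrace_trmxC_mul_eq0; rewrite -sqnormE.
  by apply/eqP; rewrite eq_le lower sqnormE mxtrace_trmxC_mul_ge0.
apply: mulmx_eq0_unitmx; case: realK TK frameT Kinj => TK _ Kinj.
  apply: realmx_mulmx_eq0 => [|x xreal]; last exact: Kinj.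
  exact: gframe_op_real (fun j => TK j isT).
by move=> x; apply: Kinj.
Qed.

Section TraceDefect.
Hypothesis Sunit : S \in unitmx.
Variable j : 'I_n.
Local Notation G := ((T j)^t* *m invmx S *m T j).
Local Notation B k := ((T k)^t* *m invmx S *m T j).

Lemma sum_trmxC_mul_gframe_coef : \sum_k (B k)^t* *m B k = G.
Proof.
have Bk k : (B k)^t* *m B k =
    (T j)^t* *m invmx S *m (T k *m (T k)^t*) *m (invmx S *m T j).
  by rewrite !trmxC_mul trmxCK trmxC_inv trmxC_gframe_op !mulmxA.
rewrite (eq_bigr _ (fun k _ => Bk k)) -mulmx_suml -mulmx_sumr.
by rewrite -!mulmxA (mulmxA S) mulmxV // mul1mx.
Qed.

Lemma trmxC_gframe_gram : G^t* = G.
Proof. by rewrite !trmxC_mul trmxCK trmxC_inv trmxC_gframe_op mulmxA. Qed.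

Lemma gframe_trace_defect : r%:R - \tr G =
  \tr ((1%:M - G)^t* *m (1%:M - G)) + \sum_(k | k != j) \tr ((B k)^t* *m B k).
Proof.
have trG2 : \tr G = \tr (G *m G) + \sum_(k | k != j) \tr ((B k)^t* *m B k).
  rewrite -{1}sum_trmxC_mul_gframe_coef raddf_sum (bigD1 j) //=.
  by rewrite trmxC_gframe_gram.
have -> : (1%:M - G)^t* = 1%:M - G.
  by rewrite linearB /= map_mxB trmx1 map_mx1 trmxC_gframe_gram.
rewrite mulmxBl !mulmxBr !mul1mx mulmx1 !raddfB /= mxtrace1 trG2; ring.
Qed.

End TraceDefect.
End GFrame.

Theorem proposition3p6 (C : numClosedFieldType) (realK : bool) (d r n : nat)
  (T : 'I_n -> 'M[C]_(d, r)) :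
  (forall j, Kmx realK (T j)) -> is_gframe realK T ->
  (forall j : 'I_n,
     \tr ((T j)^t* *m invmx (gframe_op T) *m T j) <= r%:R) /\
  (forall j : 'I_n,
     \tr ((T j)^t* *m invmx (gframe_op T) *m T j) = r%:R ->
     (forall i : 'I_r, col i (T j) != 0) /\
     (forall P : 'M[C]_d, posdef realK P -> P *m P = gframe_op T ->
        forall k : 'I_n, k != j ->
          range_orth realK (invmx P *m T k) (invmx P *m T j))).
Proof.
move=> TK frameT; have Sunit := gframe_op_unit TK frameT.
split => j.
  rewrite -subr_ge0 gframe_trace_defect // addr_ge0 ?mxtrace_trmxC_mul_ge0 //.
  by rewrite sumr_ge0 // => k _; exact: mxtrace_trmxC_mul_ge0.
move=> /eqP; rewrite eq_sym -subr_eq0 gframe_trace_defect //.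
rewrite paddr_eq0 ?mxtrace_trmxC_mul_ge0 ?sumr_ge0 // => [|k _];
  last exact: mxtrace_trmxC_mul_ge0.
case/andP => /eqP/mxtrace_trmxC_mul_eq0/eqP; rewrite subr_eq0 => /eqP G1.
move=> /eqP/psumr_eq0P B0; split => [i | P [_ PH _] PP k kj].
  by apply: (mulmx_eq1_col_neq0 (A := (T j)^t* *m invmx (gframe_op T))).
apply: range_orth_invmx_sqrt; rewrite ?PP //.
apply: mxtrace_trmxC_mul_eq0; apply: (B0 _ k kj) => l _.
exact: mxtrace_trmxC_mul_ge0.
Qed.
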